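(* Let $I$ be an index set and $P_r,Q_r\in GL(n,\mathbb C)$ for $r\in I$. There exists a biholomorphic map $f\colon\mathbb C^n\to\mathbb C^n$ with $f(P_rw)=Q_rf(w)$ for all $w\in\mathbb C^n$, $r\in I$, if and only if there exists $C\in GL(n,\mathbb C)$ with $CP_r=Q_rC$ for all $r\in I$. *)

From Stdlib Require Import Reals Arith.
Open Scope R_scope.

Definition C : Type := (R * R)%type.
Definition C0 : C := (0, 0).
Definition C1 : C := (1, 0).
Definition Cadd (a b : C) : C := (fst a + fst b, snd a + snd b).
Definition Copp (a : C) : C := (- fst a, - snd a).
Definition Cmul (a b : C) : C :=
  (fst a * fst b - snd a * snd b, fst a * snd b + snd a * fst b).
Definition Cnorm (a : C) : R := sqrt (fst a ^ 2 + snd a ^ 2).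

Definition idx (n : nat) : Type := {i : nat | (i < n)%nat}.
Definition vec (n : nat) : Type := idx n -> C.
Definition mat (n : nat) : Type := idx n -> idx n -> C.

Fixpoint Csum (k : nat) (g : nat -> C) : C :=
  match k with O => C0 | S k' => Cadd (Csum k' g) (g k') end.
Fixpoint Rsum (k : nat) (g : nat -> R) : R :=
  match k with O => 0 | S k' => Rsum k' g + g k' end.

Definition Csum_idx (n : nat) (g : idx n -> C) : C :=
  Csum n (fun j => match lt_dec j n with
                   | left h => g (exist _ j h)
                   | right _ => C0 end).
Definition Rsum_idx (n : nat) (g : idx n -> R) : R :=
  Rsum n (fun j => match lt_dec j n with
                   | left h => g (exist _ j h)
                   | right _ => 0 end).

Definition vadd {n} (v w : vec n) : vec n := fun i => Cadd (v i) (w i).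
Definition vsub {n} (v w : vec n) : vec n := fun i => Cadd (v i) (Copp (w i)).
(** Norm on C^n (l^1 norm; all norms on C^n are equivalent). *)
Definition vnorm {n} (v : vec n) : R := Rsum_idx n (fun i => Cnorm (v i)).

Definition mat_vec {n} (M : mat n) (w : vec n) : vec n :=
  fun i => Csum_idx n (fun j => Cmul (M i j) (w j)).
Definition mat_mul {n} (A B : mat n) : mat n :=
  fun i k => Csum_idx n (fun j => Cmul (A i j) (B j k)).
Definition mat_id (n : nat) : mat n :=
  fun i j => if Nat.eqb (proj1_sig i) (proj1_sig j) then C1 else C0.

Definition GL (n : nat) (A : mat n) : Prop :=
  exists B : mat n, mat_mul A B = mat_id n /\ mat_mul B A = mat_id n.

(** f : C^n -> C^n is complex (Frechet) differentiable at z, with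
    complex-linear derivative given by the matrix L. *)
Definition C_diff_at {n} (f : vec n -> vec n) (z : vec n) (L : mat n) : Prop :=
  forall eps, 0 < eps -> exists delta, 0 < delta /\
    forall h : vec n, vnorm h < delta ->
      vnorm (vsub (vsub (f (vadd z h)) (f z)) (mat_vec L h)) <= eps * vnorm h.

Definition holomorphic {n} (f : vec n -> vec n) : Prop :=
  forall z : vec n, exists L : mat n, C_diff_at f z L.

Definition biholomorphic {n} (f : vec n -> vec n) : Prop :=
  holomorphic f /\ exists g : vec n -> vec n,
    holomorphic g /\ (forall w, g (f w) = w) /\ (forall w, f (g w) = w).

(* If C intertwines the P_r and Q_r, the linear map w |-> C w is the required
   biholomorphism.  Conversely, 0 is fixed by every P_r, so differentiating
   f (P_r w) = Q_r (f w) at 0 with the chain rule gives C P_r = Q_r C for the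
   complex derivative C = Df(0), and differentiating f o f^-1 = id shows that
   C is invertible.  Equalities of derivatives come from their uniqueness: a
   linear map which is o(|h|) at 0 vanishes. *)

From Pilot Require Import Defs.
From Stdlib Require Import Reals Arith Lra Lia Psatz FunctionalExtensionality.
From Coquelicot Require Complex.
Import Defs.
Open Scope R_scope.

Lemma C_eq (a b : C) : fst a = fst b -> snd a = snd b -> a = b.
Proof. destruct a, b; simpl; intros; subst; reflexivity. Qed.

Ltac Csolve := apply C_eq; unfold Cadd, Cmul, Copp, C0, C1; simpl; ring.

(* [C] and its operations coincide definitionally with Coquelicot's complex numbers. *)
Lemma Cnorm_add_le a b : Cnorm (Cadd a b) <= Cnorm a + Cnorm b.
Proof. exact (Complex.Cmod_triangle a b). Qed.
Lemma Cnorm_mul a b : Cnorm (Cmul a b) = Cnorm a * Cnorm b.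
Proof. exact (Complex.Cmod_mult a b). Qed.
Lemma Cnorm_opp a : Cnorm (Copp a) = Cnorm a.
Proof. exact (Complex.Cmod_opp a). Qed.
Lemma Cnorm_ge0 a : 0 <= Cnorm a.
Proof. exact (Complex.Cmod_ge_0 a). Qed.
Lemma Cnorm_eq0 a : Cnorm a = 0 -> a = C0.
Proof. exact (Complex.Cmod_eq_0 a). Qed.
Lemma Cnorm_real t : Cnorm (t, 0) = Rabs t.
Proof. exact (Complex.Cmod_R t). Qed.

Lemma idx_eq n (i j : idx n) : proj1_sig i = proj1_sig j -> i = j.
Proof.
  destruct i as [i hi], j as [j hj]; simpl; intros <-.
  f_equal; apply Peano_dec.le_unique.
Qed.

Lemma Csum_ext k g h : (forall j, (j < k)%nat -> g j = h j) -> Csum k g = Csum k h.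
Proof.
  induction k as [|k IH]; simpl; intros E; auto.
  rewrite IH, E by (lia || intros; apply E; lia); reflexivity.
Qed.

Lemma Csum_add k g h : Csum k (fun j => Cadd (g j) (h j)) = Cadd (Csum k g) (Csum k h).
Proof. induction k as [|k IH]; simpl; [|rewrite IH]; Csolve. Qed.

Lemma Csum_mull k a g : Csum k (fun j => Cmul a (g j)) = Cmul a (Csum k g).
Proof. induction k as [|k IH]; simpl; [|rewrite IH]; Csolve. Qed.

Lemma Csum_mulr k a g : Csum k (fun j => Cmul (g j) a) = Cmul (Csum k g) a.
Proof. induction k as [|k IH]; simpl; [|rewrite IH]; Csolve. Qed.

Lemma Csum_eq0 k g : (forall j, (j < k)%nat -> g j = C0) -> Csum k g = C0.
Proof.
  induction k as [|k IH]; simpl; intros E; auto.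
  rewrite IH, E by (lia || intros; apply E; lia); Csolve.
Qed.

Lemma Csum_swap k m (g : nat -> nat -> C) :
  Csum k (fun i => Csum m (g i)) = Csum m (fun j => Csum k (fun i => g i j)).
Proof.
  induction k as [|k IH]; simpl.
  - symmetry; apply Csum_eq0; auto.
  - rewrite IH, <- Csum_add; reflexivity.
Qed.

Lemma Csum_delta k g j :
  (j < k)%nat -> (forall i, (i < k)%nat -> i <> j -> g i = C0) -> Csum k g = g j.
Proof.
  induction k as [|k IH]; intros Hj E; [lia|]; simpl.
  destruct (Nat.eq_dec j k) as [->|Hjk].
  - rewrite Csum_eq0 by (intros; apply E; lia); Csolve.
  - rewrite IH, (E k) by (lia || intros; apply E; lia); Csolve.
Qed.

Lemma Csum_idx_add n g h :
  Csum_idx n (fun j => Cadd (g j) (h j)) = Cadd (Csum_idx n g) (Csum_idx n h).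
Proof.
  unfold Csum_idx; rewrite <- Csum_add; apply Csum_ext; intros j _.
  destruct (lt_dec j n); [reflexivity | Csolve].
Qed.

Lemma Csum_idx_mull n a g : Csum_idx n (fun j => Cmul a (g j)) = Cmul a (Csum_idx n g).
Proof.
  unfold Csum_idx; rewrite <- Csum_mull; apply Csum_ext; intros j _.
  destruct (lt_dec j n); [reflexivity | Csolve].
Qed.

Lemma Csum_idx_mulr n a g : Csum_idx n (fun j => Cmul (g j) a) = Cmul (Csum_idx n g) a.
Proof.
  unfold Csum_idx; rewrite <- Csum_mulr; apply Csum_ext; intros j _.
  destruct (lt_dec j n); [reflexivity | Csolve].
Qed.

Lemma Csum_idx_eq0 n g : (forall j, g j = C0) -> Csum_idx n g = C0.
Proof.
  intros E; unfold Csum_idx; apply Csum_eq0; intros j _.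
  destruct (lt_dec j n); auto.
Qed.

Lemma Csum_idx_swap n (g : idx n -> idx n -> C) :
  Csum_idx n (fun i => Csum_idx n (g i)) = Csum_idx n (fun j => Csum_idx n (fun i => g i j)).
Proof.
  unfold Csum_idx.
  set (G i j := match lt_dec i n, lt_dec j n with
                | left hi, left hj => g (exist _ i hi) (exist _ j hj)
                | _, _ => C0 end).
  transitivity (Csum n (fun i => Csum n (G i))); [|rewrite Csum_swap];
    apply Csum_ext; intros k hk; unfold G; destruct (lt_dec k n); try lia;
    apply Csum_ext; intros m _; destruct (lt_dec m n); reflexivity.
Qed.

Lemma Csum_idx_delta n (g : idx n -> C) j :
  (forall i, i <> j -> g i = C0) -> Csum_idx n g = g j.
Proof.
  intros E; unfold Csum_idx; destruct j as [j hj].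
  rewrite (Csum_delta _ _ j hj).
  - destruct (lt_dec j n); [|lia]. f_equal; apply idx_eq; reflexivity.
  - intros i hi Hij; destruct (lt_dec i n); auto.
    apply E; intros Eij; apply Hij; inversion Eij; auto.
Qed.

Lemma Rsum_le k g h : (forall j, (j < k)%nat -> g j <= h j) -> Rsum k g <= Rsum k h.
Proof.
  induction k as [|k IH]; simpl; intros E; [lra|].
  apply Rplus_le_compat; [apply IH; intros|apply E]; auto.
Qed.

Lemma Rsum_ge0 k g : (forall j, (j < k)%nat -> 0 <= g j) -> 0 <= Rsum k g.
Proof.
  induction k as [|k IH]; simpl; intros E; [lra|].
  apply Rplus_le_le_0_compat; [apply IH; intros|apply E]; auto.
Qed.

Lemma Rsum_add k g h : Rsum k (fun j => g j + h j) = Rsum k g + Rsum k h.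
Proof. induction k as [|k IH]; simpl; [|rewrite IH]; ring. Qed.

Lemma Rsum_mulr k a g : Rsum k (fun j => g j * a) = Rsum k g * a.
Proof. induction k as [|k IH]; simpl; [|rewrite IH]; ring. Qed.

Lemma Rsum_ge_term k g j :
  (j < k)%nat -> (forall i, (i < k)%nat -> 0 <= g i) -> g j <= Rsum k g.
Proof.
  induction k as [|k IH]; intros Hj E; [lia|]; simpl.
  destruct (Nat.eq_dec j k) as [->|Hjk].
  - pose proof (Rsum_ge0 k g ltac:(auto)); lra.
  - pose proof (IH ltac:(lia) ltac:(auto)); pose proof (E k ltac:(lia)); lra.
Qed.

Lemma Rsum_idx_le n g h : (forall j, g j <= h j) -> Rsum_idx n g <= Rsum_idx n h.
Proof.
  intros E; unfold Rsum_idx; apply Rsum_le; intros j _.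
  destruct (lt_dec j n); [apply E|lra].
Qed.

Lemma Rsum_idx_ge0 n g : (forall j, 0 <= g j) -> 0 <= Rsum_idx n g.
Proof.
  intros E; unfold Rsum_idx; apply Rsum_ge0; intros j _.
  destruct (lt_dec j n); [apply E|lra].
Qed.

Lemma Rsum_idx_add n g h : Rsum_idx n (fun j => g j + h j) = Rsum_idx n g + Rsum_idx n h.
Proof.
  unfold Rsum_idx; rewrite <- Rsum_add; f_equal; extensionality j.
  destruct (lt_dec j n); [reflexivity|ring].
Qed.

Lemma Rsum_idx_mulr n a g : Rsum_idx n (fun j => g j * a) = Rsum_idx n g * a.
Proof.
  unfold Rsum_idx; rewrite <- Rsum_mulr; f_equal; extensionality j.
  destruct (lt_dec j n); [reflexivity|ring].
Qed.

Lemma Rsum_idx_ge_term n g j : (forall i, 0 <= g i) -> g j <= Rsum_idx n g.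
Proof.
  intros E; unfold Rsum_idx; destruct j as [j hj].
  eapply Rle_trans; [|apply (Rsum_ge_term _ _ j hj)].
  - cbv beta; destruct (lt_dec j n); [|lia]. right; f_equal; apply idx_eq; reflexivity.
  - intros i _; destruct (lt_dec i n); [apply E|lra].
Qed.

Lemma Cnorm_Csum k g : Cnorm (Csum k g) <= Rsum k (fun j => Cnorm (g j)).
Proof.
  induction k as [|k IH]; simpl.
  - unfold C0; rewrite Cnorm_real, Rabs_R0; lra.
  - eapply Rle_trans; [apply Cnorm_add_le|lra].
Qed.

Lemma Cnorm_Csum_idx n g : Cnorm (Csum_idx n g) <= Rsum_idx n (fun j => Cnorm (g j)).
Proof.
  eapply Rle_trans; [apply Cnorm_Csum|]; apply Rsum_le; intros j _.
  destruct (lt_dec j n); [lra|]. unfold C0; rewrite Cnorm_real, Rabs_R0; lra.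
Qed.

Definition vzero {n} : vec n := fun _ => C0.
Definition vscal {n} (t : R) (v : vec n) : vec n := fun i => Cmul (t, 0) (v i).

Lemma vnorm_ge0 {n} (v : vec n) : 0 <= vnorm v.
Proof. apply Rsum_idx_ge0; intros; apply Cnorm_ge0. Qed.

Lemma vnorm_add_le {n} (u v : vec n) : vnorm (vadd u v) <= vnorm u + vnorm v.
Proof. unfold vnorm; rewrite <- Rsum_idx_add; apply Rsum_idx_le; intros; apply Cnorm_add_le. Qed.

Lemma vnorm_sub_le {n} (u v : vec n) : vnorm (vsub u v) <= vnorm u + vnorm v.
Proof.
  unfold vnorm; rewrite <- Rsum_idx_add; apply Rsum_idx_le; intros.
  rewrite <- (Cnorm_opp (v j)); apply Cnorm_add_le.
Qed.

Lemma vnorm_scal {n} t (v : vec n) : vnorm (vscal t v) = Rabs t * vnorm v.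
Proof.
  unfold vnorm, vscal; rewrite Rmult_comm, <- Rsum_idx_mulr; f_equal; extensionality i.
  rewrite Cnorm_mul, Cnorm_real; ring.
Qed.

Lemma vnorm_vzero {n} : vnorm (@vzero n) = 0.
Proof.
  replace (@vzero n) with (vscal 0 (@vzero n)) by (extensionality i; unfold vscal, vzero; Csolve).
  rewrite vnorm_scal, Rabs_R0; ring.
Qed.

Lemma Cnorm_le_vnorm {n} (v : vec n) i : Cnorm (v i) <= vnorm v.
Proof. apply (Rsum_idx_ge_term n (fun i => Cnorm (v i))); intros; apply Cnorm_ge0. Qed.

Lemma vnorm_sub_eq0 {n} (u v : vec n) : vnorm (vsub u v) = 0 -> u = v.
Proof.
  intros E; extensionality i.
  pose proof (Cnorm_le_vnorm (vsub u v) i); pose proof (Cnorm_ge0 (vsub u v i)).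
  assert (Ei : vsub u v i = C0) by (apply Cnorm_eq0; lra).
  pose proof (f_equal fst Ei); pose proof (f_equal snd Ei).
  unfold vsub, Cadd, Copp, C0 in *; simpl in *; apply C_eq; lra.
Qed.

Lemma mat_id_neq n (i j : idx n) : i <> j -> mat_id n i j = C0.
Proof.
  intros Hij; unfold mat_id.
  destruct (Nat.eqb_spec (proj1_sig i) (proj1_sig j)) as [E|]; [|reflexivity].
  exfalso; apply Hij, idx_eq, E.
Qed.

Lemma mat_id_diag n (i : idx n) : mat_id n i i = C1.
Proof. unfold mat_id; rewrite Nat.eqb_refl; reflexivity. Qed.

Lemma mat_vec_id {n} (v : vec n) : mat_vec (mat_id n) v = v.
Proof.
  extensionality i; unfold mat_vec; rewrite (Csum_idx_delta _ _ i).
  - rewrite mat_id_diag; Csolve.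
  - intros j Hji; rewrite mat_id_neq by auto; Csolve.
Qed.

Lemma mat_mul_id_r {n} (M : mat n) : mat_mul M (mat_id n) = M.
Proof.
  extensionality i; extensionality j; unfold mat_mul; rewrite (Csum_idx_delta _ _ j).
  - rewrite mat_id_diag; Csolve.
  - intros k Hkj; rewrite mat_id_neq by auto; Csolve.
Qed.

Lemma mat_vec_add {n} (M : mat n) u v :
  mat_vec M (vadd u v) = vadd (mat_vec M u) (mat_vec M v).
Proof.
  extensionality i; unfold mat_vec, vadd; rewrite <- Csum_idx_add.
  f_equal; extensionality j; Csolve.
Qed.

Lemma mat_vec_scal {n} (M : mat n) t v : mat_vec M (vscal t v) = vscal t (mat_vec M v).
Proof.
  extensionality i; unfold mat_vec, vscal; rewrite <- Csum_idx_mull.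
  f_equal; extensionality j; Csolve.
Qed.

Lemma mat_vec_vzero {n} (M : mat n) : mat_vec M vzero = vzero.
Proof. extensionality i; apply Csum_idx_eq0; intros; Csolve. Qed.

Lemma mat_vec_mul {n} (A B : mat n) v : mat_vec (mat_mul A B) v = mat_vec A (mat_vec B v).
Proof.
  extensionality i; unfold mat_vec, mat_mul.
  transitivity (Csum_idx n (fun k => Csum_idx n (fun j => Cmul (A i j) (Cmul (B j k) (v k))))).
  - f_equal; extensionality k; rewrite <- Csum_idx_mulr; f_equal; extensionality j; Csolve.
  - rewrite Csum_idx_swap; f_equal; extensionality j; apply Csum_idx_mull.
Qed.

(* The columns of [A] are the images of the columns of the identity. *)
Lemma mat_vec_inj {n} (A B : mat n) : (forall v, mat_vec A v = mat_vec B v) -> A = B.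
Proof.
  intros E; rewrite <- (mat_mul_id_r A), <- (mat_mul_id_r B).
  extensionality i; extensionality j.
  exact (f_equal (fun v => v i) (E (fun k => mat_id n k j))).
Qed.

Lemma mat_vec_bound {n} (M : mat n) :
  exists K, 0 <= K /\ forall v, vnorm (mat_vec M v) <= K * vnorm v.
Proof.
  exists (Rsum_idx n (fun i => Rsum_idx n (fun j => Cnorm (M i j)))); split.
  - apply Rsum_idx_ge0; intros; apply Rsum_idx_ge0; intros; apply Cnorm_ge0.
  - intros v; unfold vnorm at 1; rewrite <- Rsum_idx_mulr; apply Rsum_idx_le; intros i.
    eapply Rle_trans; [apply Cnorm_Csum_idx|].
    rewrite <- Rsum_idx_mulr; apply Rsum_idx_le; intros j.
    rewrite Cnorm_mul; apply Rmult_le_compat_l; [apply Cnorm_ge0|apply Cnorm_le_vnorm].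
Qed.

Lemma vsub_scal {n} t (u v : vec n) : vsub (vscal t u) (vscal t v) = vscal t (vsub u v).
Proof. extensionality i; unfold vsub, vscal; Csolve. Qed.

(* Homogeneity upgrades "small near 0" to a global bound [eps * vnorm h]. *)
Lemma mat_eq_of_locally_close {n} (A B : mat n) :
  (forall eps, 0 < eps -> exists delta, 0 < delta /\ forall h, vnorm h < delta ->
     vnorm (vsub (mat_vec A h) (mat_vec B h)) <= eps * vnorm h) ->
  A = B.
Proof.
  intros Hclose; apply mat_vec_inj; intros h; apply vnorm_sub_eq0.
  set (N := vnorm (vsub (mat_vec A h) (mat_vec B h))).
  pose proof (vnorm_ge0 h) as Hh.
  assert (Hglobal : forall eps, 0 < eps -> N <= eps * vnorm h).
  { intros eps Heps; destruct (Hclose eps Heps) as [delta [Hdelta Hsmall]].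
    set (t := delta / (2 * (vnorm h + 1))).
    assert (Ht : 0 < t) by (unfold t; apply Rdiv_lt_0_compat; lra).
    assert (Hth : t * vnorm h < delta).
    { unfold t; apply (Rmult_lt_reg_r (2 * (vnorm h + 1))); [lra|].
      field_simplify; nra. }
    specialize (Hsmall (vscal t h)).
    rewrite !mat_vec_scal, vsub_scal, !vnorm_scal, Rabs_pos_eq in Hsmall by lra.
    specialize (Hsmall Hth); fold N in Hsmall.
    apply (Rmult_le_reg_l t); nra. }
  assert (HN0 : 0 <= N) by apply vnorm_ge0.
  destruct (Rle_lt_or_eq_dec 0 N HN0) as [HN|]; [|auto].
  set (u := N / (2 * (vnorm h + 1))).
  assert (Hu : u * (2 * (vnorm h + 1)) = N) by (unfold u; field; lra).
  specialize (Hglobal u ltac:(unfold u; apply Rdiv_lt_0_compat; lra)).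
  nra.
Qed.

Lemma C_diff_at_mat_vec {n} (M : mat n) z : C_diff_at (mat_vec M) z M.
Proof.
  intros eps Heps; exists 1; split; [lra|]; intros h _.
  replace (vsub (vsub (mat_vec M (vadd z h)) (mat_vec M z)) (mat_vec M h)) with (@vzero n).
  - rewrite vnorm_vzero; pose proof (vnorm_ge0 h); nra.
  - rewrite mat_vec_add; extensionality i; unfold vzero, vsub, vadd; Csolve.
Qed.

Lemma C_diff_at_unique {n} (f : vec n -> vec n) z L1 L2 :
  C_diff_at f z L1 -> C_diff_at f z L2 -> L1 = L2.
Proof.
  intros H1 H2; apply mat_eq_of_locally_close; intros eps Heps.
  destruct (H1 (eps / 2)) as [d1 [Hd1 Rem1]]; [lra|].
  destruct (H2 (eps / 2)) as [d2 [Hd2 Rem2]]; [lra|].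
  exists (Rmin d1 d2); split; [apply Rmin_pos; auto|]; intros h Hh.
  pose proof (Rmin_l d1 d2); pose proof (Rmin_r d1 d2).
  set (df := vsub (f (vadd z h)) (f z)).
  replace (vsub (mat_vec L1 h) (mat_vec L2 h))
    with (vsub (vsub df (mat_vec L2 h)) (vsub df (mat_vec L1 h)))
    by (extensionality i; unfold vsub; Csolve).
  eapply Rle_trans; [apply vnorm_sub_le|].
  specialize (Rem1 h ltac:(lra)); specialize (Rem2 h ltac:(lra)); subst df; lra.
Qed.

Lemma C_diff_at_comp {n} (f g : vec n -> vec n) z D E :
  C_diff_at f z D -> C_diff_at g (f z) E -> C_diff_at (fun w => g (f w)) z (mat_mul E D).
Proof.
  intros Hf Hg eps Heps.
  destruct (mat_vec_bound D) as [KD [HKD BD]].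
  destruct (mat_vec_bound E) as [KE [HKE BE]].
  set (a := eps / (2 * (KD + 1))).
  set (c := eps / (2 * (KE + 1))).
  set (b := Rmin 1 c).
  assert (Ha : a * (KD + 1) = eps / 2) by (unfold a; field; lra).
  assert (Hc : c * (KE + 1) = eps / 2) by (unfold c; field; lra).
  assert (Hapos : 0 < a) by (unfold a; apply Rdiv_lt_0_compat; lra).
  assert (Hcpos : 0 < c) by (unfold c; apply Rdiv_lt_0_compat; lra).
  assert (Hb1 : b <= 1) by apply Rmin_l.
  assert (Hbc : b <= c) by apply Rmin_r.
  assert (Hbpos : 0 < b) by (apply Rmin_pos; lra).
  destruct (Hf b Hbpos) as [d1 [Hd1 Remf]].
  destruct (Hg a Hapos) as [d2 [Hd2 Remg]].
  exists (Rmin d1 (d2 / (KD + 1))); split.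
  { apply Rmin_pos; [|apply Rdiv_lt_0_compat]; lra. }
  intros h Hh.
  pose proof (Rmin_l d1 (d2 / (KD + 1))); pose proof (Rmin_r d1 (d2 / (KD + 1))).
  pose proof (vnorm_ge0 h) as Hh0.
  set (k := vsub (f (vadd z h)) (f z)).
  set (r := vsub k (mat_vec D h)).
  assert (Hr : vnorm r <= b * vnorm h) by (apply Remf; lra).
  assert (Hkr : k = vadd r (mat_vec D h)) by (extensionality i; unfold r, vadd, vsub; Csolve).
  assert (Hk : vnorm k <= (KD + 1) * vnorm h).
  { rewrite Hkr; eapply Rle_trans; [apply vnorm_add_le|].
    specialize (BD h); nra. }
  assert (Hksmall : vnorm k < d2).
  { assert (Hd : d2 / (KD + 1) * (KD + 1) = d2) by (field; lra). nra. }
  specialize (Remg k Hksmall).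
  replace (vadd (f z) k) with (f (vadd z h)) in Remg
    by (extensionality i; unfold k, vadd, vsub; Csolve).
  replace (vsub (vsub (g (f (vadd z h))) (g (f z))) (mat_vec (mat_mul E D) h))
    with (vadd (vsub (vsub (g (f (vadd z h))) (g (f z))) (mat_vec E k)) (mat_vec E r))
    by (rewrite Hkr, mat_vec_add, mat_vec_mul; extensionality i; unfold vadd, vsub; Csolve).
  eapply Rle_trans; [apply vnorm_add_le|].
  specialize (BE r).
  assert (a * vnorm k <= eps / 2 * vnorm h) by nra.
  assert (KE * b <= eps / 2) by nra.
  assert (KE * vnorm r <= KE * (b * vnorm h)) by (apply Rmult_le_compat_l; lra).
  assert (KE * vnorm r <= eps / 2 * vnorm h) by nra.
  lra.
Qed.

Lemma C_diff_at_inverse_GL {n} (f g : vec n -> vec n) z D E :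
  C_diff_at f z D -> C_diff_at g (f z) E ->
  (forall w, g (f w) = w) -> (forall w, f (g w) = w) -> GL n D.
Proof.
  intros Hf Hg Hgf Hfg; exists E; split.
  - rewrite <- (Hgf z) in Hf.
    pose proof (C_diff_at_comp g f (f z) E D Hg Hf) as Hcomp.
    replace (fun w => f (g w)) with (mat_vec (mat_id n)) in Hcomp
      by (extensionality w; rewrite Hfg; apply mat_vec_id).
    symmetry; exact (C_diff_at_unique _ _ _ _ (C_diff_at_mat_vec _ _) Hcomp).
  - pose proof (C_diff_at_comp f g z D E Hf Hg) as Hcomp.
    replace (fun w => g (f w)) with (mat_vec (mat_id n)) in Hcomp
      by (extensionality w; rewrite Hgf; apply mat_vec_id).
    symmetry; exact (C_diff_at_unique _ _ _ _ (C_diff_at_mat_vec _ _) Hcomp).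
Qed.

Lemma C_diff_at_intertwine {n} (f : vec n -> vec n) (A B : mat n) z D :
  C_diff_at f z D -> mat_vec A z = z ->
  (forall w, f (mat_vec A w) = mat_vec B (f w)) -> mat_mul D A = mat_mul B D.
Proof.
  intros Hf Hz Hfix.
  assert (HfA : C_diff_at f (mat_vec A z) D) by (rewrite Hz; exact Hf).
  pose proof (C_diff_at_comp _ f z A D (C_diff_at_mat_vec A z) HfA) as Hleft.
  pose proof (C_diff_at_comp f _ z D B Hf (C_diff_at_mat_vec B (f z))) as Hright.
  replace (fun w => f (mat_vec A w)) with (fun w => mat_vec B (f w)) in Hleft
    by (extensionality w; symmetry; apply Hfix).
  exact (C_diff_at_unique _ _ _ _ Hleft Hright).
Qed.

Lemma biholomorphic_mat_vec {n} (M : mat n) : GL n M -> biholomorphic (mat_vec M).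
Proof.
  intros [M' [HMM' HM'M]]; split; [intros z; exists M; apply C_diff_at_mat_vec|].
  exists (mat_vec M'); split; [intros z; exists M'; apply C_diff_at_mat_vec|].
  split; intros w; rewrite <- mat_vec_mul; [rewrite HM'M|rewrite HMM']; apply mat_vec_id.
Qed.

Theorem theorem3p5 (n : nat) (I : Type) (P Q : I -> mat n)
  (HP : forall r, GL n (P r)) (HQ : forall r, GL n (Q r)) :
  (exists f : vec n -> vec n, biholomorphic f /\
     forall (w : vec n) (r : I), f (mat_vec (P r) w) = mat_vec (Q r) (f w))
  <->
  (exists Cm : mat n, GL n Cm /\ forall r : I, mat_mul Cm (P r) = mat_mul (Q r) Cm).
Proof.
  split.
  - intros [f [[Hf [g [Hg [Hgf Hfg]]]] Hequiv]].
    destruct (Hf vzero) as [D HD]; destruct (Hg (f vzero)) as [E HE].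
    exists D; split.
    + exact (C_diff_at_inverse_GL f g vzero D E HD HE Hgf Hfg).
    + intros r; apply (C_diff_at_intertwine f _ _ vzero D HD (mat_vec_vzero _)).
      intros w; apply Hequiv.
  - intros [Cm [HCm Hcomm]]; exists (mat_vec Cm); split.
    + exact (biholomorphic_mat_vec Cm HCm).
    + intros w r; rewrite <- !mat_vec_mul, Hcomm; reflexivity.
Qed.
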